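(* Let $l\ge1$, let $G$ be an $l$-step nilpotent group and let $S$ be a symmetric subset of $G$. Then for every $h\in G$ and every $g$ in the subgroup $\langle S\rangle$ generated by $S$, the commutator $[g,h]$ can be written as a product of iterated commutators $[x_1,\dots,x_i]$ with $i\le l$, where $x_j\in S\cup\{h,h^{-1}\}$ for each $j=1,\dots,i$, and in each such iterated commutator at least one $x_j$ lies in $\{h,h^{-1}\}$.
   Context: For group elements, $[y,z]=yzy^{-1}z^{-1}$, and the iterated commutator is $[x_1,\dots,x_i]=[x_1,[x_2,\dots,[x_{i-1},x_i]\dots]]$ for $i\ge2$. The descending central series is $C^0(G)=G$, $C^{j+1}(G)=[G,C^j(G)]$, and $G$ is $l$-step nilpotent if $C^l(G)=\{1\}$ and $C^{l-1}(G)\ne\{1\}$. *)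

From Stdlib Require Import List Arith.
Import ListNotations.

(* A group: associative operation with left identity and left inverses
   (these axioms imply the usual two-sided group axioms). *)
Record Group := {
  carrier :> Type;
  gmul : carrier -> carrier -> carrier;
  ginv : carrier -> carrier;
  gone : carrier;
  gmulA : forall x y z, gmul x (gmul y z) = gmul (gmul x y) z;
  gmul1l : forall x, gmul gone x = x;
  gmulVl : forall x, gmul (ginv x) x = gone
}.
Arguments gmul {g}.
Arguments ginv {g}.
Arguments gone {g}.

Section Defs.
Variable G : Group.

Definition comm (y z : G) : G := gmul (gmul (gmul y z) (ginv y)) (ginv z).

(* iterated commutator [x1,...,xi] = [x1,[x2,...,[x_{i-1},x_i]...]];
   only used for lists of length >= 2 *)
Fixpoint icomm (s : list G) : G :=
  match s with
  | [] => gone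
  | x :: s' => match s' with
               | [] => x
               | _ => comm x (icomm s')
               end
  end.

Inductive gen (A : G -> Prop) : G -> Prop :=
| gen_base a : A a -> gen A a
| gen_one : gen A gone
| gen_mul x y : gen A x -> gen A y -> gen A (gmul x y)
| gen_inv x : gen A x -> gen A (ginv x).

Fixpoint lcs (j : nat) : G -> Prop :=
  match j with
  | 0 => fun _ => True
  | S j' => gen (fun z => exists g c, lcs j' c /\ z = comm g c)
  end.

Definition trivial_subset (A : G -> Prop) : Prop := forall x, A x <-> x = gone.

Definition nilpotent_step (l : nat) : Prop :=
  trivial_subset (lcs l) /\ ~ trivial_subset (lcs (l - 1)).

Definition symmetric (S : G -> Prop) : Prop := forall x, S x -> S (ginv x).

End Defs.

Arguments comm {G}.
Arguments icomm {G}.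
Arguments gen {G}.
Arguments lcs {G}.
Arguments nilpotent_step : clear implicits.
Arguments symmetric {G}.

(** Write g = s_1 ... s_k with s_j in S.  The identity [ab,h] = a[b,h]a^-1 [a,h]
    reduces [g,h] to conjugates by elements of S of the commutators [s,h], and
    conjugation acts on iterated commutators by a c a^-1 = [a,c] c.  Each
    conjugation lengthens a commutator by one letter of S; once the length
    exceeds l the commutator lies in C^l(G) = 1 and can be dropped. *)

From Stdlib Require Import List Arith Lia.
Import ListNotations.

Notation gprod := (fold_right gmul gone).

Section GroupLaws.
Variable G : Group.
Implicit Types a b c h x y : G.

Lemma gmulA' x y c : gmul (gmul x y) c = gmul x (gmul y c).
Proof. now rewrite gmulA. Qed.

Lemma gmulV x : gmul x (ginv x) = gone.
Proof.
  rewrite <- (gmul1l G (gmul x (ginv x))), <- (gmulVl G (ginv x)).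
  now rewrite <- gmulA, (gmulA _ (ginv x) x), gmulVl, gmul1l, gmulVl.
Qed.

Lemma gmul1r x : gmul x gone = x.
Proof. now rewrite <- (gmulVl G x), gmulA, gmulV, gmul1l. Qed.

Lemma gmulKl x y : gmul (ginv x) (gmul x y) = y.
Proof. now rewrite gmulA, gmulVl, gmul1l. Qed.

Lemma gmulKr x y : gmul x (gmul (ginv x) y) = y.
Proof. now rewrite gmulA, gmulV, gmul1l. Qed.

Lemma ginv_unique x y : gmul x y = gone -> ginv x = y.
Proof. intro Hxy. now rewrite <- (gmul1r (ginv x)), <- Hxy, gmulKl. Qed.

Lemma ginvM x y : ginv (gmul x y) = gmul (ginv y) (ginv x).
Proof. apply ginv_unique. now rewrite gmulA', gmulKr, gmulV. Qed.

Lemma ginv1 : ginv (@gone G) = gone.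
Proof. apply ginv_unique, gmul1l. Qed.

Hint Rewrite gmulA' gmul1l gmul1r gmulVl gmulV gmulKl gmulKr ginvM ginv1
  : gsimp.

Lemma comm1g h : comm gone h = gone.
Proof. unfold comm. now autorewrite with gsimp. Qed.

Lemma comm_mull a b h :
  comm (gmul a b) h = gmul (gmul (gmul a (comm b h)) (ginv a)) (comm a h).
Proof. unfold comm. now autorewrite with gsimp. Qed.

Lemma conj_as_comm a c : gmul (gmul a c) (ginv a) = gmul (comm a c) c.
Proof. unfold comm. now autorewrite with gsimp. Qed.

Lemma conj_mul a x y :
  gmul (gmul a (gmul x y)) (ginv a) =
  gmul (gmul (gmul a x) (ginv a)) (gmul (gmul a y) (ginv a)).
Proof. now autorewrite with gsimp. Qed.

Lemma conj1 a : gmul (gmul a gone) (ginv a) = gone.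
Proof. now autorewrite with gsimp. Qed.

Lemma gprod_app (xs ys : list G) : gprod (xs ++ ys) = gmul (gprod xs) (gprod ys).
Proof.
  induction xs as [|x xs IH]; simpl.
  - now rewrite gmul1l.
  - now rewrite IH, gmulA.
Qed.

Lemma ginv_gprod (xs : list G) : ginv (gprod xs) = gprod (rev (map ginv xs)).
Proof.
  induction xs as [|x xs IH]; simpl.
  - apply ginv1.
  - now rewrite gprod_app, <- IH, ginvM; simpl; rewrite gmul1r.
Qed.

Lemma gen_gprod (A : G -> Prop) g :
  symmetric A -> gen A g -> exists xs, Forall A xs /\ g = gprod xs.
Proof.
  intros symA genAg.
  induction genAg as [a Aa| |x y _ [xs [Axs ->]] _ [ys [Ays ->]]|x _ [xs [Axs ->]]].
  - exists [a]. split; [now constructor | simpl; now rewrite gmul1r].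
  - now exists [].
  - exists (xs ++ ys). split; [now apply Forall_app | now rewrite gprod_app].
  - exists (rev (map ginv xs)). split; [|apply ginv_gprod].
    apply Forall_rev, Forall_map. eapply Forall_impl; [exact symA | exact Axs].
Qed.

Lemma icomm_cons x w : w <> [] -> icomm (x :: w) = comm x (icomm w).
Proof. now destruct w. Qed.

Lemma icomm_lcs (w : list G) n : length w = S n -> lcs n (icomm w).
Proof.
  revert n; induction w as [|x w IH]; intros n len_w; [discriminate|].
  destruct w as [|y w']; simpl in len_w; injection len_w as len_w.
  - now subst n.
  - destruct n as [|n]; [discriminate|].
    apply gen_base. exists x, (icomm (y :: w')). split; [|reflexivity].
    apply IH. simpl. now rewrite len_w.
Qed.

End GroupLaws.

Section CommutatorProducts.
Variables (G : Group) (l : nat) (S : G -> Prop) (h : G).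
Hypothesis l_ge1 : 1 <= l.
Hypothesis lcs_l_trivial : trivial_subset G (lcs l).

Definition h_like (x : G) : Prop := x = h \/ x = ginv h.

Definition hcomm_word (w : list G) : Prop :=
  2 <= length w <= l /\
  Forall (fun x => S x \/ h_like x) w /\
  Exists h_like w.

Definition hcomm_product (x : G) : Prop :=
  exists ws, x = gprod (map icomm ws) /\ Forall hcomm_word ws.

Lemma hcomm_product1 : hcomm_product gone.
Proof. now exists []. Qed.

Lemma hcomm_productM x y :
  hcomm_product x -> hcomm_product y -> hcomm_product (gmul x y).
Proof.
  intros [xs [-> Hxs]] [ys [-> Hys]]. exists (xs ++ ys).
  split; [now rewrite map_app, gprod_app | now apply Forall_app].
Qed.

(* Commutators of length l + 1 vanish, so the bound [length w <= l] of
   [hcomm_word] may be relaxed by one. *)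
Lemma hcomm_product_icomm (w : list G) :
  2 <= length w <= l + 1 ->
  Forall (fun x => S x \/ h_like x) w -> Exists h_like w ->
  hcomm_product (icomm w).
Proof.
  intros len_w letters_w h_in_w.
  destruct (Nat.eq_dec (length w) (l + 1)) as [len_eq|len_ne].
  - rewrite Nat.add_1_r in len_eq.
    rewrite (proj1 (lcs_l_trivial _) (icomm_lcs G w l len_eq)).
    apply hcomm_product1.
  - exists [w]. simpl. rewrite gmul1r.
    split; [reflexivity | repeat constructor; auto; lia].
Qed.

Lemma hcomm_product_conj a x :
  S a -> hcomm_product x -> hcomm_product (gmul (gmul a x) (ginv a)).
Proof.
  intros Sa [ws [-> Hws]].
  induction Hws as [|w ws [len_w [letters_w h_in_w]] _ IH]; simpl.
  - rewrite conj1. apply hcomm_product1.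
  - rewrite conj_mul. apply hcomm_productM; [|exact IH].
    rewrite conj_as_comm, <- icomm_cons by (intros ->; simpl in len_w; lia).
    apply hcomm_productM.
    + apply hcomm_product_icomm; simpl; [lia | now constructor; auto | now right].
    + apply hcomm_product_icomm; auto; lia.
Qed.

Lemma hcomm_product_comm (gs : list G) :
  Forall S gs -> hcomm_product (comm (gprod gs) h).
Proof.
  induction 1 as [|s gs Ss _ IH]; simpl.
  - rewrite comm1g. apply hcomm_product1.
  - rewrite comm_mull. apply hcomm_productM.
    + now apply hcomm_product_conj.
    + apply (hcomm_product_icomm [s; h]); simpl.
      * lia.
      * constructor; [now left | constructor; [now right; left | constructor]].
      * right. now left; left.
Qed.

End CommutatorProducts.

Theorem lemma2p5p2 (G : Group) (l : nat) (S : G -> Prop) :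
  1 <= l -> nilpotent_step G l -> symmetric S ->
  forall h g : G, gen S g ->
  exists ws : list (list G),
    comm g h = fold_right gmul gone (map icomm ws) /\
    Forall (fun w =>
      2 <= length w <= l /\
      Forall (fun x => S x \/ x = h \/ x = ginv h) w /\
      Exists (fun x => x = h \/ x = ginv h) w) ws.
Proof.
  intros l_ge1 [lcs_l_trivial _] symS h g genSg.
  destruct (gen_gprod _ S g symS genSg) as [gs [Sgs ->]].
  exact (hcomm_product_comm G l S h l_ge1 lcs_l_trivial gs Sgs).
Qed.
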